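(* Fix a solution point $i$ with Jacobian value $J_i>0$. For a state $\hat{\mathbf U}=J_i[\rho,\rho V_1,\rho V_2,\rho V_3,\rho E]^\top\in\mathbb R^5$ with $\rho>0$, let $\mathrm{IE}(\hat{\mathbf U})=\hat u_5-\dfrac{\hat u_2^2+\hat u_3^2+\hat u_4^2}{2\hat u_1}$ denote its internal energy (where $\hat u_k$ are the components of $\hat{\mathbf U}$). Let $\hat{\mathbf U}_1,\hat{\mathbf U}_p\in\mathbb R^5$ be given, with $\hat{\mathbf U}_1$ having positive density $(\rho_1)_i>0$ and positive internal energy $\mathrm{IE}(\hat{\mathbf U}_1)>0$. For $\theta\in[0,1]$ put $\hat{\mathbf U}(\theta)=(1-\theta)\hat{\mathbf U}_1+\theta\hat{\mathbf U}_p$ with density $\rho_i(\theta)$ (first component divided by $J_i$). Let $\aleph\in(0,1)$, $\epsilon^{\rho}_i=(\rho_1)_i\aleph$, $\epsilon^{\mathrm{IE}}_i=\mathrm{IE}(\hat{\mathbf U}_1)\aleph$, and let $H^{\rho}_i=\{\theta\in[0,1]:\rho_i(\theta)\ge\epsilon^{\rho}_i\}=[0,\theta^{\rho}_i]$ with $0<\theta^{\rho}_i\le1$. Define $$H^{\mathrm{IE}}_i=\{\theta\in H^{\rho}_i\;:\;\mathrm{IE}(\hat{\mathbf U}(\theta))\ge\epsilon^{\mathrm{IE}}_i\}.$$ Then $H^{\mathrm{IE}}_i=[0,\theta^{\mathrm{IE}}_i]$ for some $0<\theta^{\mathrm{IE}}_i\le\theta^{\rho}_i$. Moreover: (1) if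 $0\le\theta<\theta^{\mathrm{IE}}_i$, then $\mathrm{IE}(\hat{\mathbf U}(\theta))>\epsilon^{\mathrm{IE}}_i$; and (2) if $\theta^{\mathrm{IE}}_i<\theta^{\rho}_i$, then $\mathrm{IE}(\hat{\mathbf U}(\theta^{\mathrm{IE}}_i))=\epsilon^{\mathrm{IE}}_i$.
   Context: $\hat{\mathbf U}_1$ and $\hat{\mathbf U}_p$ are the first-order (positivity-preserving) and $p$th-order updates at a solution point of a spectral collocation scheme; $\hat{\mathbf U}(\theta)$ is their convex blend with flux limiter $\theta$. The fact that $H^{\rho}_i$ is an interval $[0,\theta^\rho_i]$ with $0<\theta^\rho_i\le 1$ follows since $\rho_i(\theta)$ is affine in $\theta$ with $\rho_i(0)>\epsilon^\rho_i$. *)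

From mathcomp Require Import all_boot all_order all_algebra.
From mathcomp Require Import reals.
Set Implicit Arguments. Unset Strict Implicit. Unset Printing Implicit Defensive.
Import Order.TTheory GRing.Theory Num.Theory.
Local Open Scope ring_scope.

Section Defs.
Variable R : realType.

(* Internal energy IE(U) = u5 - (u2^2+u3^2+u4^2)/(2 u1)  (0-based indices). *)
Definition IE (U : 'rV[R]_5) : R :=
  U 0 (4 : 'I_5) - (U 0 (1 : 'I_5) ^+ 2 + U 0 (2 : 'I_5) ^+ 2 + U 0 (3 : 'I_5) ^+ 2)
                   / (2 * U 0 (0 : 'I_5)).

Definition dens (J : R) (U : 'rV[R]_5) : R := U 0 (0 : 'I_5) / J.

Definition blend (U1 Up : 'rV[R]_5) (theta : R) : 'rV[R]_5 :=
  (1 - theta) *: U1 + theta *: Up.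

Definition Hrho (J aleph : R) (U1 Up : 'rV[R]_5) (theta : R) : Prop :=
  0 <= theta <= 1 /\ dens J (blend U1 Up theta) >= dens J U1 * aleph.

Definition HIE (J aleph : R) (U1 Up : 'rV[R]_5) (theta : R) : Prop :=
  Hrho J aleph U1 Up theta /\ IE (blend U1 Up theta) >= IE U1 * aleph.

End Defs.

(* The internal energy u5 - |m|^2/(2 u1) is concave on states of positive
   density, since (x, a) |-> x^2/a is the (convex) perspective of the square.
   Along the blend segment, theta |-> IE(U(theta)) - eps_IE is therefore
   concave on the density-admissible interval [0, theta_rho] and positive at 0,
   so its nonnegativity set is an initial interval, on whose interior it is
   strictly positive.  When it is negative at theta_rho, the right end point is
   a root, found by the intermediate value theorem applied to the polynomial
   2 u1(theta) (IE(U(theta)) - eps_IE). *)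
From mathcomp Require Import all_boot all_order all_algebra.
From mathcomp Require Import reals.
From mathcomp Require Import polyrcf ring lra.
Set Implicit Arguments. Unset Strict Implicit. Unset Printing Implicit Defensive.
Import Order.TTheory GRing.Theory Num.Theory.
Local Open Scope ring_scope.

Lemma convex_comb_gt0 (R : realFieldType) (a b t : R) :
  0 < a -> 0 < b -> 0 <= t <= 1 -> 0 < (1 - t) * a + t * b.
Proof. by move=> a0 b0 /andP[t0 t1]; nra. Qed.

Lemma sqr_div_convex (R : realFieldType) (a b x y t : R) :
  0 < a -> 0 < b -> 0 <= t <= 1 ->
  ((1 - t) * x + t * y) ^+ 2 / ((1 - t) * a + t * b)
    <= (1 - t) * (x ^+ 2 / a) + t * (y ^+ 2 / b).
Proof.
move=> a0 b0 t01; have c0 := convex_comb_gt0 a0 b0 t01.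
case/andP: t01 => t0 t1.
set p := x / a; set q := y / b.
have -> : x = a * p by rewrite /p mulrC divfK // gt_eqF.
have -> : y = b * q by rewrite /q mulrC divfK // gt_eqF.
have -> : (a * p) ^+ 2 / a = a * p ^+ 2 by field; rewrite gt_eqF.
have -> : (b * q) ^+ 2 / b = b * q ^+ 2 by field; rewrite gt_eqF.
rewrite ler_pdivrMr // -subr_ge0.
have -> : ((1 - t) * (a * p ^+ 2) + t * (b * q ^+ 2)) * ((1 - t) * a + t * b)
          - ((1 - t) * (a * p) + t * (b * q)) ^+ 2
        = (t * (1 - t)) * (a * b) * (p - q) ^+ 2 by ring.
by rewrite mulr_ge0 ?sqr_ge0 // !mulr_ge0 // ?subr_ge0 // ltW.
Qed.

Lemma IE_concave (R : realType) (A B : 'rV[R]_5) (t : R) :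
  0 < A 0 0 -> 0 < B 0 0 -> 0 <= t <= 1 ->
  (1 - t) * IE A + t * IE B <= IE ((1 - t) *: A + t *: B).
Proof.
move=> a0 b0 t01; have c0 := convex_comb_gt0 a0 b0 t01.
rewrite /IE !mxE.
have split_sum (c x y z : R) : 0 < c ->
    (x ^+ 2 + y ^+ 2 + z ^+ 2) / (2 * c) = (x ^+ 2 / c + y ^+ 2 / c + z ^+ 2 / c) / 2.
  by move=> c0'; field; rewrite gt_eqF.
rewrite !split_sum //.
have := sqr_div_convex (A 0 1) (B 0 1) a0 b0 t01.
have := sqr_div_convex (A 0 2) (B 0 2) a0 b0 t01.
have := sqr_div_convex (A 0 3) (B 0 3) a0 b0 t01.
lra.
Qed.

Section ConcaveSuperlevel.
Variables (R : realFieldType) (f : R -> R) (r : R).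
Hypothesis r_gt0 : 0 < r.
Hypothesis f_concave : forall x y t, 0 <= x <= r -> 0 <= y <= r -> 0 <= t <= 1 ->
  (1 - t) * f x + t * f y <= f ((1 - t) * x + t * y).
Hypothesis f0_gt0 : 0 < f 0.
Hypothesis f_ivt : f r < 0 -> exists2 x, 0 <= x <= r & f x = 0.

Lemma concave_gt0_before x y : 0 <= x < y -> y <= r -> 0 <= f y -> 0 < f x.
Proof.
move=> /andP[x0 xy] yr fy; have y0 : 0 < y by apply: le_lt_trans xy.
set t := x / y.
have t0 : 0 <= t by rewrite divr_ge0 // ltW.
have t1 : t < 1 by rewrite ltr_pdivrMr // mul1r.
have conc : (1 - t) * f 0 + t * f y <= f x.
  by have := @f_concave 0 y t; rewrite mulr0 add0r divfK ?gt_eqF //; apply; lra.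
have : 0 < (1 - t) * f 0 by rewrite mulr_gt0 // subr_gt0.
have : 0 <= t * f y by apply: mulr_ge0.
lra.
Qed.

Lemma concave_ge0_upto x y : 0 <= x <= y -> y <= r -> 0 <= f y -> 0 <= f x.
Proof.
move=> /andP[x0 xy] yr fy; have [-> //|ne] := eqVneq x y.
by apply/ltW/(concave_gt0_before _ yr fy); rewrite x0 lt_neqAle ne.
Qed.

Lemma concave_superlevel : exists s,
  [/\ 0 < s <= r,
      forall x, 0 <= x <= r -> (0 <= f x <-> x <= s),
      forall x, 0 <= x < s -> 0 < f x
    & s < r -> f s = 0].
Proof.
have [fr|fr] := lerP 0 (f r).
  exists r; split; rewrite ?ltxx ?r_gt0 ?lexx //.
  - move=> x /andP[x0 xr]; split=> // _.
    by apply: (concave_ge0_upto _ (lexx r)); rewrite ?x0.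
  - by move=> x xr; apply: (concave_gt0_before xr).
have [s /andP[s0 sr] fs] := f_ivt fr.
have s_gt0 : 0 < s.
  rewrite lt_neqAle s0 andbT; apply/eqP => s_eq0.
  by move: f0_gt0; rewrite [X in f X]s_eq0 fs ltxx.
exists s; split=> //; first by rewrite s_gt0.
- move=> x /andP[x0 xr]; split=> [fx|xs].
    rewrite leNgt; apply/negP => sx.
    have fs_gt0 : 0 < f s by apply: (concave_gt0_before _ xr fx); rewrite s0 sx.
    by rewrite fs ltxx in fs_gt0.
  by apply: (concave_ge0_upto _ sr); rewrite ?x0 ?fs.
- by move=> x xs; apply: (concave_gt0_before xs sr); rewrite fs.
Qed.

End ConcaveSuperlevel.

Section BlendSegment.
Variables (R : realType) (U1 Up : 'rV[R]_5).

Lemma blend0 : blend U1 Up 0 = U1.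
Proof. by rewrite /blend subr0 scale1r scale0r addr0. Qed.

Lemma blend_convex_comb x y t :
  blend U1 Up ((1 - t) * x + t * y) = (1 - t) *: blend U1 Up x + t *: blend U1 Up y.
Proof. by apply/rowP => k; rewrite !mxE; ring. Qed.

Lemma IE_blend_concave x y t :
  0 < blend U1 Up x 0 0 -> 0 < blend U1 Up y 0 0 -> 0 <= t <= 1 ->
  (1 - t) * IE (blend U1 Up x) + t * IE (blend U1 Up y)
    <= IE (blend U1 Up ((1 - t) * x + t * y)).
Proof. by rewrite blend_convex_comb; apply: IE_concave. Qed.

Lemma IE_blend_scaled_poly eps : exists g : {poly R}, forall theta,
  blend U1 Up theta 0 0 != 0 ->
  g.[theta] = 2 * blend U1 Up theta 0 0 * (IE (blend U1 Up theta) - eps).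
Proof.
pose P (k : 'I_5) : {poly R} := (U1 0 k)%:P + (Up 0 k - U1 0 k)%:P * 'X.
have PE k theta : (P k).[theta] = blend U1 Up theta 0 k.
  by rewrite /P !hornerE !mxE; ring.
exists (2%:P * P 0 * (P 4 - eps%:P) - (P 1 ^+ 2 + P 2 ^+ 2 + P 3 ^+ 2)).
by move=> theta; rewrite /IE -!PE !hornerE => nz; field.
Qed.

Lemma IE_blend_ivt eps a b : a <= b ->
  (forall theta, a <= theta <= b -> 0 < blend U1 Up theta 0 0) ->
  IE (blend U1 Up b) <= eps <= IE (blend U1 Up a) ->
  exists2 x, a <= x <= b & IE (blend U1 Up x) = eps.
Proof.
move=> ab dens_gt0 /andP[IEb IEa].
have [g gE] := IE_blend_scaled_poly eps.
have [ga gb] : (0 < blend U1 Up a 0 0) /\ (0 < blend U1 Up b 0 0).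
  by split; apply: dens_gt0; rewrite ?ab lexx.
have sign : g.[a] * g.[b] <= 0.
  rewrite !gE ?gt_eqF // mulrACA; apply: mulr_ge0_le0.
    by rewrite !mulr_ge0 ?ltW.
  by apply: mulr_ge0_le0; rewrite ?subr_ge0 ?subr_le0.
have [x] := polyrcf.poly_ivt ab sign; rewrite in_itv /= => xab /rootP.
have gx := dens_gt0 x xab.
rewrite gE ?gt_eqF // => /eqP; rewrite !mulf_eq0 pnatr_eq0 (gt_eqF gx) /= subr_eq0.
by move=> /eqP IEx; exists x.
Qed.

End BlendSegment.

Theorem lemma2 (R : realType) (J aleph theta_rho : R) (U1 Up : 'rV[R]_5) :
  0 < J ->
  0 < dens J U1 ->
  0 < IE U1 ->
  0 < aleph < 1 ->
  0 < theta_rho <= 1 ->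
  (forall theta : R, Hrho J aleph U1 Up theta <-> 0 <= theta <= theta_rho) ->
  exists theta_IE : R,
    [/\ 0 < theta_IE <= theta_rho,
        (forall theta : R, HIE J aleph U1 Up theta <-> 0 <= theta <= theta_IE),
        (forall theta : R, 0 <= theta < theta_IE ->
            IE (blend U1 Up theta) > IE U1 * aleph)
      & (theta_IE < theta_rho -> IE (blend U1 Up theta_IE) = IE U1 * aleph)].
Proof.
move=> J_gt0 dens1_gt0 IE1_gt0 /andP[aleph_gt0 aleph_lt1] /andP[r_gt0 _] Hrho_iff.
set eps := IE U1 * aleph.
pose f theta := IE (blend U1 Up theta) - eps.
have dens_gt0 theta : 0 <= theta <= theta_rho -> 0 < blend U1 Up theta 0 0.
  move=> /Hrho_iff[_]; rewrite /dens => le_dens.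
  have := lt_le_trans (mulr_gt0 dens1_gt0 aleph_gt0) le_dens.
  by rewrite pmulr_lgt0 // invr_gt0.
have f_concave x y t : 0 <= x <= theta_rho -> 0 <= y <= theta_rho -> 0 <= t <= 1 ->
    (1 - t) * f x + t * f y <= f ((1 - t) * x + t * y).
  move=> /dens_gt0 x_gt0 /dens_gt0 y_gt0 t01.
  have := IE_blend_concave x_gt0 y_gt0 t01; rewrite /f; lra.
have f0_gt0 : 0 < f 0 by rewrite /f blend0 subr_gt0 gtr_pMr.
have f_ivt : f theta_rho < 0 -> exists2 x, 0 <= x <= theta_rho & f x = 0.
  move=> fr_lt0; have [|x x_range IEx] := IE_blend_ivt (eps := eps) (ltW r_gt0) dens_gt0.
    by move: f0_gt0 fr_lt0; rewrite /f blend0; lra.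
  by exists x; rewrite // /f IEx subrr.
have [s [/andP[s_gt0 s_le_r] f_ge0_iff f_gt0 f_root]] :=
  concave_superlevel r_gt0 f_concave f0_gt0 f_ivt.
exists s; split; rewrite ?s_gt0 //.
- move=> theta; split=> [[/Hrho_iff theta_range IE_ge]|/andP[theta_ge0 theta_le_s]].
    by rewrite (andP theta_range).1 -f_ge0_iff // subr_ge0.
  have theta_range : 0 <= theta <= theta_rho by rewrite theta_ge0 (le_trans theta_le_s).
  by split; [apply/Hrho_iff | rewrite -subr_ge0; apply/f_ge0_iff; rewrite ?theta_le_s].
- by move=> theta /f_gt0; rewrite subr_gt0.
- by move=> /f_root /eqP; rewrite subr_eq0 => /eqP.
Qed.
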